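(* Let $(\alpha_n)_{n\ge0}$ be complex numbers with $|\alpha_n|<1$, let $n,r,s$ be nonnegative integers, and suppose $\alpha_i\neq0$ for $0\le i\le n+r$. If $n\ge1$, then \[ \eta_{n,r,s}=-\left(\overline{\alpha_{s-1}}\right)^{-1}\sum_p\mathrm{wt}_S(p), \] where the sum is over all Schröder paths from $(0,r)$ to $(n,s)$ that neither start nor end with a vertical down-step $(0,-1)$. If $n=0$, then \[ \eta_{0,r,s}=\begin{cases}-\dfrac{1}{\overline{\alpha_{r-1}}}&\text{if } s=r,\\[2pt] \dfrac{1-|\alpha_{r-1}|^2}{\overline{\alpha_{r-1}}}&\text{if } s=r-1,\\[2pt] 0&\text{otherwise.}\end{cases} \]
   Context: For a polynomial $f(z)=\sum_{k=0}^n a_kz^k$ of degree $n$, write $\overline{f}(z)=\sum_k\overline{a_k}z^k$ and $f^*(z)=z^n\overline{f}(1/z)$. Define monic $\Phi_n$ by $\Phi_0=1$, $\Phi_{n+1}(z)=z\Phi_n(z)-\overline{\alpha_n}\Phi_n^*(z)$, where $\Phi_n^*(z)=z^n\overline{\Phi_n}(1/z)$. Set $\alpha_{-1}=-1$. Under the hypothesis, the polynomials $\Phi_0^*,\dots,\Phi_{n+r}^*$ have degrees $0,\dots,n+r$, so there are unique coefficients $c_{n,r,s}$ with $z^n\Phi_r(z)=\sum_{s=0}^{n+r}c_{n,r,s}\Phi_s^*(z)$; set $c_{n,r,s}=0$ for $s>n+r$ and $\eta_{n,r,s}=\overline{c_{n,r,s}}$. A Schröder path is a lattice path in $\mathbb{Z}\times\mathbb{Z}_{\ge0}$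 with steps $(1,1)$, $(1,0)$, $(0,-1)$. $\mathrm{wt}_S(p)$ is the product of step weights: $(a,b)\to(a+1,b+1)$ weight $1$; $(a,b)\to(a+1,b)$ weight $-\overline{\alpha_{b-1}}/\overline{\alpha_b}$; $(a,b)\to(a,b-1)$ weight $\frac{\overline{\alpha_{b-2}}}{\overline{\alpha_{b-1}}}(1-|\alpha_{b-1}|^2)$. *)

(* Complex numbers are modelled by an arbitrary
   numClosedFieldType C (this includes the complex numbers). *)
From HB Require Import structures.
From mathcomp Require Import all_boot all_order all_algebra.
Set Implicit Arguments. Unset Strict Implicit. Unset Printing Implicit Defensive.
Import Order.TTheory GRing.Theory Num.Theory.
Local Open Scope ring_scope.

Section Defs.
Variable C : numClosedFieldType.

(* f^*(z) = z^d conj(f)(1/z), for a polynomial f of degree (at most) d *)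
Definition pstar (d : nat) (p : {poly C}) : {poly C} :=
  \poly_(i < d.+1) (p`_(d - i))^*.

Fixpoint Phi (alpha : nat -> C) (k : nat) : {poly C} :=
  match k with
  | 0%N => 1
  | k'.+1 => 'X * Phi alpha k' - (alpha k')^* *: pstar k' (Phi alpha k')
  end.

Definition Phi_star (alpha : nat -> C) (k : nat) : {poly C} :=
  pstar k (Phi alpha k).

(* am1 alpha j = alpha_{j-1}, with the convention alpha_{-1} = -1 *)
Definition am1 (alpha : nat -> C) (j : nat) : C :=
  if j is j'.+1 then alpha j' else -1.

End Defs.

(* Schroder steps: U = (1,1), H = (1,0), D = (0,-1) *)
Inductive step := SU | SH | SD.

Definition step_to (s : step) : 'I_3 :=
  match s with SU => inord 0 | SH => inord 1 | SD => inord 2 end.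
Definition step_of (i : 'I_3) : step :=
  match val i with 0%N => SU | 1%N => SH | _ => SD end.
Lemma step_K : cancel step_to step_of.
Proof. by case; rewrite /step_of /= inordK. Qed.
HB.instance Definition _ := Finite.copy step (can_type step_K).

Fixpoint valid_from (h : nat) (p : seq step) (s : nat) : bool :=
  match p with
  | [::] => h == s
  | SU :: p' => valid_from h.+1 p' s
  | SH :: p' => valid_from h p' s
  | SD :: p' => (0 < h)%N && valid_from h.-1 p' s
  end.

Definition xlen (p : seq step) : nat := count (fun st => st != SD) p.

Definition schroder_ok (n r s : nat) (p : seq step) : bool :=
  [&& valid_from r p s, xlen p == n, head SH p != SD & last SH p != SD].

Section Weights.
Variable C : numClosedFieldType.
Variable alpha : nat -> C.

Fixpoint wtS (h : nat) (p : seq step) : C :=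
  match p with
  | [::] => 1
  | SU :: p' => wtS h.+1 p'
  | SH :: p' => (- (am1 alpha h)^* / (am1 alpha h.+1)^*) * wtS h p'
  | SD :: p' => ((am1 alpha h.-1)^* / (am1 alpha h)^*
                  * (1 - `|am1 alpha h| ^+ 2)) * wtS h.-1 p'
  end.

(* Such paths have length at most 2n + r
   (#U + #H = n and #D = r + #U - s), so enumerating step sequences of
   length <= 2n + r enumerates all of them. *)
Definition schroder_sum (n r s : nat) : C :=
  \sum_(k < (2 * n + r).+1) \sum_(t : k.-tuple step | schroder_ok n r s t)
     wtS r t.
End Weights.

(* Let A_m(s) be the weighted sum over the Schroder paths from (0,r) to (m,s)
   that do not start with a down step but may end with one, and S_m(s) the sum
   of the theorem.  Sorting paths by their last step gives
     S_(m+1)(s) = A_m(s-1) + w_H(s) A_m(s)   and, for m > 0,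
     A_m(s) = S_m(s) + w_D(s+1) A_m(s+1).
   The Szego recursion gives z Phi_s = (Phi*_s - Phi*_(s+1)) / alpha_s and
   Phi*_s = rho_s Phi*_(s-1) - alpha_(s-1) Phi_s with rho_s = 1 - |alpha_(s-1)|^2.
   With the first of these and the recurrence for S, the expansion
   z^m Phi_r = sum_s conj(A_m(s)) Phi_s turns into
   z^(m+1) Phi_r = sum_s conj(eta_(m+1,s)) Phi*_s; with the second, the
   recurrence for A and Abel summation, this turns back into the expansion of
   z^(m+1) Phi_r in the Phi_s.  As Phi*_s has degree s and leading
   coefficient -alpha_(s-1) <> 0, coefficients in the Phi*_s are unique.  For
   n = 0 one solves the second recursion for Phi_r. *)

From HB Require Import structures.
From mathcomp Require Import all_boot all_order all_algebra.
From mathcomp Require Import zify ring.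
Import Order.TTheory GRing.Theory Num.Theory.
Set Implicit Arguments. Unset Strict Implicit. Unset Printing Implicit Defensive.
Local Open Scope ring_scope.

Lemma neq_SD (x : step) : (x != SD) = if x is SD then false else true.
Proof. by case: x; rewrite ?eqxx //; apply/eqP. Qed.

Definition steps : seq step := [:: SU; SH; SD].

Lemma mem_steps (x : step) : x \in steps.
Proof. by case: x; rewrite !inE eqxx ?orbT. Qed.

Lemma uniq_steps : uniq steps.
Proof. by rewrite /= !inE; apply/and3P; split=> //; apply/negP; [case/orP|] => /eqP. Qed.

Fixpoint words (k : nat) : seq (seq step) :=
  if k is k'.+1 then [seq rcons t x | t <- words k', x <- steps] else [:: [::]].

Lemma mem_words k t : (t \in words k) = (size t == k).
Proof.
elim: k t => [|k IH] t; first by rewrite inE; case: t.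
apply/allpairsP/idP => [[[t' x]] /= [t'k _ ->]|].
  by rewrite size_rcons eqSS -IH.
case/lastP: t => [|t' x] //; rewrite size_rcons eqSS -IH => t'k.
by exists (t', x); split; rewrite ?mem_steps.
Qed.

Lemma uniq_words k : uniq (words k).
Proof.
elim: k => [|k IH] //; apply: allpairs_uniq => //; first exact: uniq_steps.
by move=> [t x] [t' x'] _ _ /= /rcons_inj.
Qed.

Lemma big_tuple_words (R : nmodType) k (P : pred (seq step)) (F : seq step -> R) :
  \sum_(t : k.-tuple step | P t) F t = \sum_(t <- words k | P t) F t.
Proof.
rewrite -(big_map val P F); apply/perm_big/uniq_perm.
- by rewrite (map_inj_uniq val_inj) index_enum_uniq.
- exact: uniq_words.
move=> t; rewrite mem_words; apply/mapP/idP => [[u _ ->]|tk].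
  by rewrite size_tuple.
by exists (Tuple tk); rewrite ?mem_index_enum.
Qed.

Lemma valid_from_rconsU h t s :
  valid_from h (rcons t SU) s = (0 < s)%N && valid_from h t s.-1.
Proof.
elim: t h => [|[] t IH] h /=; rewrite ?IH //; first by case: s.
by rewrite andbCA.
Qed.

Lemma valid_from_rconsH h t s : valid_from h (rcons t SH) s = valid_from h t s.
Proof. by elim: t h => [|[] t IH] h //=; rewrite IH. Qed.

Lemma valid_from_rconsD h t s : valid_from h (rcons t SD) s = valid_from h t s.+1.
Proof. by elim: t h => [|[] t IH] h /=; rewrite ?IH //; case: h. Qed.

Lemma xlen_rcons t x : xlen (rcons t x) = (xlen t + (x != SD))%N.
Proof. by rewrite /xlen -cats1 count_cat /= addn0. Qed.

Lemma xlen_cons x t : xlen (x :: t) = ((x != SD) + xlen t)%N.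
Proof. by []. Qed.

Lemma valid_from_leq h t s : valid_from h t s -> (s <= h + xlen t)%N.
Proof.
elim: t h => [|x t IH] h; first by move=> /= /eqP ->; rewrite addn0.
rewrite xlen_cons neq_SD; case: x => /=.
- by move/IH; lia.
- by move/IH; lia.
- by case/andP=> h0 /IH; lia.
Qed.

Lemma valid_from_size h t s : valid_from h t s -> (size t + s <= 2 * xlen t + h)%N.
Proof.
elim: t h => [|x t IH] h; first by move=> /= /eqP ->.
rewrite xlen_cons neq_SD; case: x => /=.
- by move/IH; lia.
- by move/IH; lia.
- by case/andP=> h0 /IH; lia.
Qed.

Lemma head_rcons (t : seq step) x :
  head SH (rcons t x) = if t is y :: _ then y else x.
Proof. by case: t. Qed.

Lemma xlen_eq0_head (t : seq step) : xlen t = 0%N -> head SH t != SD -> t = [::].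
Proof. by case: t => [|x t] //; rewrite xlen_cons /= neq_SD; case: x. Qed.

Section PathSums.
Variables (C : numClosedFieldType) (alpha : nat -> C) (r : nat).

Definition step_wt (h : nat) (x : step) : C :=
  match x with
  | SU => 1
  | SH => - (am1 alpha h)^* / (am1 alpha h.+1)^*
  | SD => (am1 alpha h.-1)^* / (am1 alpha h)^* * (1 - `|am1 alpha h| ^+ 2)
  end.

Lemma wtS_rcons h t s x : valid_from h t s ->
  wtS alpha h (rcons t x) = wtS alpha h t * step_wt s x.
Proof.
elim: t h => [|[] t IH] h /=; first by move/eqP->; case: x; rewrite /step_wt /= ?mulr1 ?mul1r.
- exact: IH.
- by move/IH->; rewrite mulrA.
- by case/andP=> _ /IH->; rewrite mulrA.
Qed.

Definition path_sum K (P : pred (seq step)) : C :=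
  \sum_(k < K) \sum_(t <- words k | P t) wtS alpha r t.

Lemma path_sum_eq0 K (P : pred (seq step)) : (forall t, ~~ P t) -> path_sum K P = 0.
Proof.
move=> nP; rewrite /path_sum big1 // => k _.
by rewrite big_seq_cond big_pred0 // => t; rewrite (negbTE (nP t)) andbF.
Qed.

Lemma path_sum_bound K0 K (P : pred (seq step)) :
  (forall t, P t -> (size t < K0)%N) -> (K0 <= K)%N -> path_sum K P = path_sum K0 P.
Proof.
move=> Psize K0K; rewrite /path_sum -(subnKC K0K) big_split_ord /=.
rewrite [X in _ + X]big1 ?addr0 // => k _.
rewrite big_seq_cond big_pred0 // => t; rewrite mem_words.
by apply/negP => /andP[/eqP tk /Psize]; rewrite tk; lia.
Qed.

Definition last_step_sum K (P : pred (seq step)) (x : step) : C :=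
  \sum_(k < K) \sum_(t <- words k | P (rcons t x)) wtS alpha r (rcons t x).

Lemma path_sumS K (P : pred (seq step)) : path_sum K.+1 P =
  (P [::])%:R + last_step_sum K P SU + last_step_sum K P SH + last_step_sum K P SD.
Proof.
rewrite /path_sum big_ord_recl big_mkcond big_seq1 -!addrA; congr (_ + _).
  by case: (P [::]).
rewrite -!big_split; apply: eq_bigr => k _ /=.
rewrite big_mkcond big_flatten big_map add0n !(big_mkcond (fun t => P (rcons t _))).
rewrite -!big_split /=; apply: eq_bigr => t _.
by rewrite !big_cons big_nil addr0.
Qed.

Lemma last_step_sumE K (P Q : pred (seq step)) x s :
  (forall t, P (rcons t x) = Q t) -> (forall t, Q t -> valid_from r t s) ->
  last_step_sum K P x = path_sum K Q * step_wt s x.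
Proof.
move=> PQ Qs; rewrite /last_step_sum /path_sum big_distrl; apply: eq_bigr => k _.
rewrite big_distrl; apply: eq_big => t; rewrite PQ // => /Qs; exact: wtS_rcons.
Qed.

Lemma last_step_sum_eq0 K (P : pred (seq step)) x :
  (forall t, ~~ P (rcons t x)) -> last_step_sum K P x = 0.
Proof.
move=> nP; rewrite /last_step_sum big1 // => k _.
by rewrite big_seq_cond big_pred0 // => t; rewrite (negbTE (nP t)) andbF.
Qed.

Lemma eq_last_step_sum K (P Q : pred (seq step)) x :
  (forall t, P (rcons t x) = Q (rcons t x)) -> last_step_sum K P x = last_step_sum K Q x.
Proof. by move=> PQ; apply: eq_bigr => k _; apply: eq_bigl => t; exact: PQ. Qed.

End PathSums.

Arguments step_wt : simpl never.

Section SchroderSums.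
Variables (C : numClosedFieldType) (alpha : nat -> C) (r : nat).

Definition schroder_pre n s t :=
  [&& valid_from r t s, xlen t == n & head SH t != SD].

Definition schroder_pre_sum n s : C :=
  path_sum alpha r (2 * n + r).+1 (schroder_pre n s).

Lemma schroder_sumE n s :
  schroder_sum alpha n r s = path_sum alpha r (2 * n + r).+1 (schroder_ok n r s).
Proof. by apply: eq_bigr => k _; rewrite big_tuple_words. Qed.

Lemma schroder_pre_sumE n s K : (2 * n + r - s < K)%N ->
  path_sum alpha r K (schroder_pre n s) = schroder_pre_sum n s.
Proof.
have pre_size t : schroder_pre n s t -> (size t < (2 * n + r - s).+1)%N.
  by case/and3P=> /valid_from_size + /eqP tn _; rewrite tn; lia.
move=> nK; rewrite /schroder_pre_sum !(path_sum_bound _ _ pre_size) //; lia.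
Qed.

Lemma schroder_pre_sum0 s : schroder_pre_sum 0 s = (s == r)%:R.
Proof.
rewrite /schroder_pre_sum muln0 add0n path_sumS !last_step_sum_eq0 ?addr0.
- by rewrite /schroder_pre /= eq_sym neq_SD !andbT.
all: by move=> t; apply/and3P => -[_ /eqP/xlen_eq0_head t0 /t0]; case: (t).
Qed.

Lemma schroder_sumS n s : schroder_sum alpha n.+1 r s =
  (if (0 < s)%N then schroder_pre_sum n s.-1 else 0)
  + schroder_pre_sum n s * step_wt alpha s SH.
Proof.
rewrite schroder_sumE (_ : (2 * n.+1 + r).+1 = (2 * n + r).+3)%N; last lia.
rewrite path_sumS [last_step_sum _ _ _ _ SD]last_step_sum_eq0; last first.
  by move=> t; rewrite /schroder_ok last_rcons eqxx !andbF.
rewrite /schroder_ok /= andbF /= add0r addr0.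
rewrite (@last_step_sumE _ _ _ _ _ (schroder_pre n s) SH s); first last.
- by move=> t /and3P[].
- move=> t; rewrite valid_from_rconsH xlen_rcons neq_SD addn1 eqSS head_rcons last_rcons.
  by case: t => [|y t]; rewrite /schroder_pre ?neq_SD /= ?andbT.
rewrite schroder_pre_sumE; last lia.
case: s => [|s] /=.
  rewrite last_step_sum_eq0 ?add0r // => t.
  by rewrite /schroder_ok valid_from_rconsU.
rewrite (@last_step_sumE _ _ _ _ _ (schroder_pre n s) SU s); first last.
- by move=> t /and3P[].
- move=> t; rewrite valid_from_rconsU xlen_rcons neq_SD addn1 eqSS head_rcons last_rcons.
  by case: t => [|y t]; rewrite /schroder_pre ?neq_SD /= ?andbT.
by rewrite schroder_pre_sumE ?mulr1 //; lia.
Qed.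

Lemma schroder_pre_sum_split n s : (0 < n)%N ->
  schroder_pre_sum n s =
  schroder_sum alpha n r s + schroder_pre_sum n s.+1 * step_wt alpha s.+1 SD.
Proof.
case: n => // n _; rewrite schroder_sumE {1}/schroder_pre_sum.
rewrite [LHS]path_sumS [path_sum _ _ _ (schroder_ok _ _ _)]path_sumS.
rewrite [last_step_sum _ _ _ (schroder_ok _ _ _) SD]last_step_sum_eq0; last first.
  by move=> t; rewrite /schroder_ok last_rcons eqxx !andbF.
rewrite (@last_step_sumE _ _ _ _ _ (schroder_pre n.+1 s.+1) SD s.+1); first last.
- by move=> t /and3P[].
- move=> t; rewrite /schroder_pre valid_from_rconsD xlen_rcons neq_SD addn0 head_rcons.
  by case: t => [|y t].
rewrite addr0 schroder_pre_sumE; last lia.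
congr (_ + _ + _ + _); try apply: eq_last_step_sum => t.
all: by rewrite /schroder_ok /schroder_pre /= ?last_rcons ?neq_SD ?andbT.
Qed.

Lemma schroder_pre_sum_eq0 n s : (n + r < s)%N -> schroder_pre_sum n s = 0.
Proof.
move=> nrs; apply: path_sum_eq0 => t.
by apply/and3P => -[/valid_from_leq + /eqP tn _]; rewrite tn; lia.
Qed.

Lemma schroder_sum_eq0 n s : (n + r < s)%N -> schroder_sum alpha n r s = 0.
Proof.
move=> nrs; rewrite schroder_sumE; apply: path_sum_eq0 => t.
by apply/and4P => -[/valid_from_leq + /eqP tn _ _]; rewrite tn; lia.
Qed.

End SchroderSums.

Lemma triangular_sum_eq0 (R : idomainType) (q : nat -> {poly R}) (u : nat -> R) K :
  (forall s, (s < K)%N -> (size (q s) <= s.+1)%N /\ (q s)`_s != 0) ->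
  \sum_(s < K) u s *: q s = 0 -> forall s, (s < K)%N -> u s = 0.
Proof.
elim: K => [|K IH] // qK; rewrite big_ord_recr /= => sum0.
have [_ qKK] := qK K (ltnSn K).
have uK : u K = 0.
  move/(congr1 (fun p : {poly R} => p`_K)): sum0; rewrite coef0 coefD coef_sum coefZ.
  rewrite big1 ?add0r => [/eqP|i _]; first by rewrite mulf_eq0 (negbTE qKK) orbF => /eqP.
  have [sq _] := qK i (ltnW (ltn_ord i)).
  by rewrite coefZ nth_default ?mulr0 // (leq_trans sq).
move: sum0; rewrite uK scale0r addr0 => /IH {}IH s; rewrite ltnS leq_eqVlt.
case/orP => [/eqP -> //|]; apply: IH => i iK; apply: qK; exact: ltnW.
Qed.

Section Szego.
Variables (C : numClosedFieldType) (alpha : nat -> C).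
Local Notation a := (am1 alpha).
Local Notation rho j := (1 - `|am1 alpha j| ^+ 2).
Local Notation Ph := (Phi alpha).
Local Notation Ps := (Phi_star alpha).

Lemma am1_neq0 N j :
  (forall i, (i <= N)%N -> alpha i != 0) -> (j <= N.+1)%N -> a j != 0.
Proof. by case: j => [_ _|j anz jN] /=; [rewrite oppr_eq0 oner_eq0 | apply: anz]. Qed.

Lemma conjC_rho (x : C) : (1 - `|x| ^+ 2)^* = 1 - `|x| ^+ 2.
Proof. by rewrite rmorphB rmorph1 rmorphXn /= conj_normC. Qed.

Lemma coef_pstar d (p : {poly C}) i :
  (pstar d p)`_i = if (i <= d)%N then (p`_(d - i))^* else 0.
Proof. by rewrite coef_poly ltnS. Qed.

Lemma pstarB d (p q : {poly C}) : pstar d (p - q) = pstar d p - pstar d q.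
Proof.
by apply/polyP => i; rewrite coefB !coef_pstar coefB; case: ifP; rewrite ?subr0 ?rmorphB.
Qed.

Lemma pstarZ d c (p : {poly C}) : pstar d (c *: p) = c^* *: pstar d p.
Proof.
by apply/polyP => i; rewrite coefZ !coef_pstar coefZ; case: ifP; rewrite ?mulr0 ?rmorphM.
Qed.

Lemma pstarK d (p : {poly C}) : (size p <= d.+1)%N -> pstar d (pstar d p) = p.
Proof.
move=> sp; apply/polyP => i; rewrite !coef_pstar.
case: leqP => [id|di]; first by rewrite leq_subr subKn // conjCK.
by rewrite nth_default //; apply: leq_trans sp di.
Qed.

Lemma pstarS d (p : {poly C}) : (size p <= d.+1)%N -> pstar d.+1 p = 'X * pstar d p.
Proof.
move=> sp; apply/polyP => -[|i]; rewrite coefXM !coef_pstar /=.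
  by rewrite subn0 nth_default ?rmorph0.
by rewrite ltnS subSS.
Qed.

Lemma pstar_mulX d (p : {poly C}) : (size p <= d.+1)%N ->
  pstar d.+1 ('X * p) = pstar d p.
Proof.
move=> sp; apply/polyP => i; rewrite !coef_pstar coefXM.
case: (ltngtP i d.+1) => [id|di|->]; last by rewrite subnn ltnn rmorph0.
- by rewrite subSn // -ltnS id.
- by rewrite leqNgt (ltnW di).
Qed.

Lemma Phi_monic k : Ph k \is monic /\ size (Ph k) = k.+1.
Proof.
elim: k => [|k [mk sk]] /=; first by rewrite monic1 size_poly1.
have sXP : size ('X * Ph k) = k.+2 by rewrite mulrC size_mulX ?monic_neq0 ?sk.
have sP : (size ((alpha k)^* *: pstar k (Ph k))%R < size ('X * Ph k)%R)%N.
  by rewrite sXP ltnS (leq_trans (size_scale_leq _ _)) ?size_poly.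
split; last by rewrite size_addl ?size_opp.
by rewrite monicE lead_coefDl ?size_opp // mulrC lead_coefMX.
Qed.

Lemma size_Phi k : size (Ph k) = k.+1.
Proof. by case: (Phi_monic k). Qed.

Lemma coef_Phi_deg k : (Ph k)`_k = 1.
Proof. by have [/monicP <- sk] := Phi_monic k; rewrite lead_coefE sk. Qed.

Lemma size_Phi_star k : (size (Ps k) <= k.+1)%N.
Proof. exact: size_poly. Qed.

Lemma Phi_star0 : Ps 0 = 1.
Proof. by apply/polyP => -[|i]; rewrite coef_pstar coef1 //= rmorph1. Qed.

Lemma Phi_starS k : Ps k.+1 = Ps k - alpha k *: ('X * Ph k).
Proof.
rewrite /Phi_star /= pstarB pstarZ pstar_mulX ?size_Phi //.
by rewrite pstarS ?size_poly // pstarK ?size_Phi // conjCK.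
Qed.

Lemma Phi_star_rec k : Ps k = rho k *: Ps k.-1 - a k *: Ph k.
Proof.
case: k => [|k] /=.
  by rewrite Phi_star0 normrN normr1 expr1n subrr scale0r sub0r scaleN1r opprK.
rewrite Phi_starS /= scalerBr scalerA -normCK scalerBl scale1r.
by rewrite opprB addrA subrK.
Qed.

Lemma coef_Phi_star_deg k : (Ps k)`_k = - a k.
Proof.
case: k => [|k]; first by rewrite Phi_star0 coef1 opprK.
rewrite Phi_star_rec coefB !coefZ coef_Phi_deg mulr1 nth_default ?mulr0 ?sub0r //.
exact: size_Phi_star.
Qed.

Lemma mulX_Phi k : alpha k != 0 -> 'X * Ph k = (alpha k)^-1 *: (Ps k - Ps k.+1).
Proof. by move=> ak; rewrite Phi_starS opprB addrC subrK scalerA mulVf // scale1r. Qed.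

Lemma Phi_Phi_star k : a k != 0 -> Ph k = (a k)^-1 *: (rho k *: Ps k.-1 - Ps k).
Proof.
move=> ak; rewrite [Ps k]Phi_star_rec opprB addrC subrK scalerA mulVf //.
by rewrite scale1r.
Qed.

Lemma Phi_in_Phi_star k : a k != 0 -> Ph k =
  \sum_(s < k.+1) (if s == k :> nat then - (a k)^-1
                   else if s.+1 == k then rho k / a k else 0) *: Ps s.
Proof.
move=> ak; rewrite {1}(Phi_Phi_star ak) big_ord_recr /= eqxx scalerBr scalerA.
rewrite scaleNr mulrC; congr (_ - _).
case: k ak => [|k] ak; first by rewrite big_ord0 /= normrN normr1 expr1n subrr mul0r scale0r.
rewrite big_ord_recr /= eqxx ltn_eqF // big1 ?add0r // => s _.
by rewrite eqSS (ltn_eqF (ltn_ord s)) (ltn_eqF (leqW (ltn_ord s))) scale0r.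
Qed.

Lemma sum_Phi_star_abel N (T : nat -> C) :
  \sum_(s < N) (T s - rho s.+1 * T s.+1) *: Ps s =
  - \sum_(s < N) (a s * T s) *: Ph s - (rho N * T N) *: Ps N.-1.
Proof.
elim: N => [|N IH].
  by rewrite !big_ord0 /= normrN normr1 expr1n subrr mul0r scale0r oppr0 addr0.
rewrite !big_ord_recr /= IH [Ps N]Phi_star_rec.
by apply/polyP => i; rewrite !(coefD, coefB, coefZ, coefN); ring.
Qed.

Lemma mulX_sum_Phi N (b : nat -> C) :
  (forall s, (s < N)%N -> alpha s != 0) -> b N = 0 ->
  'X * \sum_(s < N) b s *: Ph s =
  \sum_(s < N.+1) (b s / alpha s - (if (0 < s)%N then b s.-1 / alpha s.-1 else 0)) *: Ps s.
Proof.
move=> aN bN; rewrite mulr_sumr.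
under eq_bigr => s _ do
  rewrite -scalerAr (mulX_Phi (aN _ (ltn_ord s))) scalerA scalerBr.
under [RHS]eq_bigr do rewrite scalerBl.
rewrite !sumrB big_ord_recr /= bN mul0r scale0r addr0 big_ord_recl /= scale0r add0r.
by congr (_ - _); apply: eq_bigr => i _; rewrite mulrC.
Qed.

End Szego.

Section Expansions.
Variables (C : numClosedFieldType) (alpha : nat -> C) (r : nat).
Local Notation a := (am1 alpha).
Local Notation rho j := (1 - `|am1 alpha j| ^+ 2).
Local Notation Ph := (Phi alpha).
Local Notation Ps := (Phi_star alpha).
Local Notation pre := (schroder_pre_sum alpha r).

Definition eta n s : C :=
  if n is 0 then
    if s == r then - ((a r)^*)^-1
    else if s.+1 == r then (1 - `|a r| ^+ 2) / (a r)^* else 0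
  else - ((a s)^*)^-1 * schroder_sum alpha n r s.

Lemma eta_pos n s : (0 < n)%N -> eta n s = - ((a s)^*)^-1 * schroder_sum alpha n r s.
Proof. by case: n. Qed.

Lemma eta_eq0 n s : (n + r < s)%N -> eta n s = 0.
Proof.
case: n => [|n] rs /=; last by rewrite schroder_sum_eq0 ?mulr0.
by rewrite !gtn_eqF // ltnW.
Qed.

Lemma conjC_eta0 s : (eta 0 s)^* =
  if s == r then - (a r)^-1 else if s.+1 == r then rho r / a r else 0.
Proof.
rewrite /eta /=; case: ifP => _; first by rewrite rmorphN fmorphV /= conjCK.
by case: ifP => _; rewrite ?rmorph0 // rmorphM fmorphV /= conjCK conjC_rho.
Qed.

Lemma conjC_eta_succ m s : (forall i, (i <= m.+1 + r)%N -> alpha i != 0) ->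
  (s <= m.+1 + r)%N ->
  (eta m.+1 s)^* = (pre m s)^* / alpha s
                   - (if (0 < s)%N then (pre m s.-1)^* / alpha s.-1 else 0).
Proof.
move=> anz sN; rewrite /eta schroder_sumS /step_wt.
have as0 : alpha s != 0 by apply: anz.
case: s sN as0 => [|s] sN as0 /=.
  rewrite !(rmorphM, rmorphN, rmorphD, fmorphV, rmorphN1) /= !conjCK rmorph0.
  by field.
have as1 : alpha s != 0 by apply: anz; lia.
rewrite !(rmorphM, rmorphN, rmorphD, fmorphV) /= !conjCK.
by field; apply/andP.
Qed.

Lemma conjC_eta_split m s : (0 < m)%N ->
  (forall i, (i <= m + r)%N -> alpha i != 0) -> (s <= m + r)%N ->
  (eta m s)^* = - (pre m s)^* / a s - rho s.+1 * (- (pre m s.+1)^* / a s.+1).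
Proof.
move=> m0 anz sN; rewrite eta_pos //.
have -> : schroder_sum alpha m r s = pre m s - pre m s.+1 * step_wt alpha s.+1 SD.
  by rewrite (@schroder_pre_sum_split _ alpha r m s m0) addrK.
have as0 : a s != 0 by apply: (am1_neq0 anz); lia.
have as1 : alpha s != 0 by apply: anz.
rewrite /step_wt /= !(rmorphM, rmorphN, fmorphV) rmorphB !(rmorphM, fmorphV) /= conjC_rho !conjCK.
by field; apply/andP.
Qed.

Lemma mulX_sum_pre_Phi m : (forall i, (i <= m.+1 + r)%N -> alpha i != 0) ->
  'X * \sum_(s < (m + r).+1) (pre m s)^* *: Ph s =
  \sum_(s < (m.+1 + r).+1) (eta m.+1 s)^* *: Ps s.
Proof.
move=> anz; rewrite (@mulX_sum_Phi _ alpha _ (fun s => (pre m s)^*)) => [|s sN|]; first last.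
- by rewrite schroder_pre_sum_eq0 ?rmorph0.
- by apply: anz; lia.
by apply: eq_bigr => s _; rewrite conjC_eta_succ // -ltnS.
Qed.

Lemma sum_eta_Phi_star m : (0 < m)%N -> (forall i, (i <= m + r)%N -> alpha i != 0) ->
  \sum_(s < (m + r).+1) (eta m s)^* *: Ps s = \sum_(s < (m + r).+1) (pre m s)^* *: Ph s.
Proof.
move=> m0 anz; pose T j := - (pre m j)^* / a j.
rewrite (eq_bigr (fun s : 'I_ _ => (T s - rho s.+1 * T s.+1) *: Ps s)) => [|s _]; last first.
  by rewrite conjC_eta_split // -ltnS.
rewrite sum_Phi_star_abel [T _.+1]/T schroder_pre_sum_eq0 ?rmorph0; last lia.
rewrite oppr0 !mul0r mulr0 scale0r subr0 -sumrN; apply: eq_bigr => s _.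
have as0 := am1_neq0 anz (ltnW (ltn_ord s)).
by rewrite /T -scaleNr; congr (_ *: _); field.
Qed.

Lemma mulXn_Phi_in_Phi m : (forall i, (i <= m + r)%N -> alpha i != 0) ->
  'X^m * Ph r = \sum_(s < (m + r).+1) (pre m s)^* *: Ph s.
Proof.
elim: m => [|m IH] anz.
  rewrite expr0 mul1r add0n big_ord_recr /= schroder_pre_sum0 eqxx rmorph1 scale1r.
  rewrite big1 ?add0r // => s _.
  by rewrite schroder_pre_sum0 ltn_eqF // rmorph0 scale0r.
rewrite exprS -mulrA IH => [|i iN]; last by apply: anz; lia.
by rewrite mulX_sum_pre_Phi // -sum_eta_Phi_star.
Qed.

Lemma mulXn_Phi_in_Phi_star n : (forall i, (i <= n + r)%N -> alpha i != 0) ->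
  'X^n * Ph r = \sum_(s < (n + r).+1) (eta n s)^* *: Ps s.
Proof.
case: n => [|m] anz.
  rewrite expr0 mul1r add0n (Phi_in_Phi_star (am1_neq0 anz _)) ?leqW //.
  by apply: eq_bigr => s _; rewrite conjC_eta0.
rewrite exprS -mulrA mulXn_Phi_in_Phi => [|i iN]; last by apply: anz; lia.
exact: mulX_sum_pre_Phi.
Qed.

End Expansions.

Theorem proposition5p3 (C : numClosedFieldType) (alpha : nat -> C)
  (n r : nat) (c : nat -> C)
  (Hlt : forall k, `|alpha k| < 1)
  (Hnz : forall i, (i <= n + r)%N -> alpha i != 0)
  (Hc : 'X^n * Phi alpha r = \sum_(s < (n + r).+1) c s *: Phi_star alpha s)
  (Hc0 : forall s, (n + r < s)%N -> c s = 0)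
  (s : nat) :
  ((0 < n)%N -> (c s)^* = - ((am1 alpha s)^*)^-1 * schroder_sum alpha n r s)
  /\
  (n = 0%N -> (c s)^* =
     if s == r then - ((am1 alpha r)^*)^-1
     else if s.+1 == r then (1 - `|am1 alpha r| ^+ 2) / (am1 alpha r)^*
     else 0).
Proof.
have diff0 : \sum_(j < (n + r).+1) (c j - (eta alpha r n j)^*) *: Phi_star alpha j = 0.
  by under eq_bigr do rewrite scalerBl; rewrite sumrB -Hc mulXn_Phi_in_Phi_star // subrr.
have c_eta : c s = (eta alpha r n s)^*.
  have [nrs|sN] := ltnP (n + r) s; first by rewrite Hc0 // eta_eq0 // rmorph0.
  apply/eqP; rewrite -subr_eq0; apply/eqP.
  move: s sN; apply: (triangular_sum_eq0 _ diff0) => j jN.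
  split; first exact: size_Phi_star.
  by rewrite coef_Phi_star_deg oppr_eq0 (am1_neq0 Hnz (leqW jN)).
by rewrite c_eta conjCK; split => [/eta_pos|->].
Qed.
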